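(* Let $\mathcal{M}=((X,\mathcal{C}),\mathcal{V})$ be a quasi-discrete closure model, $x\in X$, and $\phi_1,\phi_2$ SLCS formulas. Then $\mathcal{M},x\models\phi_1\,\mathcal{S}\,\phi_2$ (path-based semantics) if and only if there exists $A\subseteq X$ with $x\in A$ such that $\mathcal{M},y\models\phi_1$ for all $y\in A$ and $\mathcal{M},z\models\phi_2$ for all $z\in\mathcal{C}(A)\setminus A$.
   Context: A closure space is $(X,\mathcal{C})$ with $\mathcal{C}:\wp(X)\to\wp(X)$, $\mathcal{C}(\emptyset)=\emptyset$, $A\subseteq\mathcal{C}(A)$, $\mathcal{C}(A\cup B)=\mathcal{C}(A)\cup\mathcal{C}(B)$. It is quasi-discrete if there is $R\subseteq X\times X$ with $\mathcal{C}=\mathcal{C}_R$, where $\mathcal{C}_R(A)=A\cup\{x\mid\exists a\in A.(a,x)\in R\}$ (equivalently, $\mathcal{C}(A)=\bigcup_{a\in A}\mathcal{C}(\{a\})$ for all $A$). A function between closure spaces is continuous if $f(\mathcal{C}_1(A))\subseteq\mathcal{C}_2(f(A))$. Paths in a quasi-discrete space are continuous functions $p:(\mathbb{N},\mathcal{C}_\succ)\to(X,\mathcal{C})$ where $\succ=\{(n,n+1)\mid n\in\mathbb{N}\}$. A quasi-discrete closure model is $\mathcal{M}=((X,\mathcal{C}),\mathcal{V})$ with $(X,\mathcal{C})$ quasi-discrete and $\mathcal{V}:AP\to 2^X$. SLCS formulas: $\Phi::=a\mid\top\mid\lnot\Phi\mid\Phi\land\Phi\mid\mathcal{N}\Phi\mid\Phi\,\mathcal{S}\,\Phi\mid\Phi\rightsquigarrow\Phi$,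 with semantics: $x\models a$ iff $x\in\mathcal{V}(a)$; boolean connectives as usual; $x\models\mathcal{N}\phi$ iff $x\in\mathcal{C}(\{y\mid y\models\phi\})$; $x\models\phi_1\,\mathcal{S}\,\phi_2$ iff $x\models\phi_1$ and for every path $p$ with $p(0)=x$ and every $l\in\mathbb{N}$, if $p(l)\models\lnot\phi_1$ then there is $k$ with $0<k\le l$ and $p(k)\models\phi_2$; $x\models\phi_1\rightsquigarrow\phi_2$ iff $x\models\phi_2$ and there exist $y$, a path $p$ and $l$ with $p(0)=y$, $p(l)=x$, $y\models\phi_1$ and $p(i)\models\phi_2$ for all $0<i<l$. *)

From Stdlib Require Import Classical.

Definition set (X : Type) := X -> Prop.
Definition set_empty {X : Type} : set X := fun _ => False.
Definition set_union {X : Type} (A B : set X) : set X := fun x => A x \/ B x.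
Definition set_sub {X : Type} (A B : set X) : Prop := forall x, A x -> B x.
Definition set_eq {X : Type} (A B : set X) : Prop := forall x, A x <-> B x.
Definition image {X Y : Type} (f : X -> Y) (A : set X) : set Y :=
  fun y => exists x, A x /\ f x = y.

Record closure_space (X : Type) := {
  clos :> set X -> set X;
  clos_empty : set_eq (clos set_empty) set_empty;
  clos_extensive : forall A, set_sub A (clos A);
  clos_union : forall A B, set_eq (clos (set_union A B)) (set_union (clos A) (clos B))
}.
Arguments clos {X} _ _ _.

Definition clos_R {X : Type} (R : X -> X -> Prop) (A : set X) : set X :=
  fun x => A x \/ exists a, A a /\ R a x.

Definition quasi_discrete {X : Type} (CS : closure_space X) : Prop :=
  exists R : X -> X -> Prop, forall A, set_eq (clos CS A) (clos_R R A).

Definition continuous {X Y : Type} (C1 : set X -> set X) (C2 : set Y -> set Y)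
  (f : X -> Y) : Prop :=
  forall A, set_sub (image f (C1 A)) (C2 (image f A)).

Definition succ_rel (m n : nat) : Prop := n = S m.
Definition clos_succ : set nat -> set nat := clos_R succ_rel.

Definition is_path {X : Type} (CS : closure_space X) (p : nat -> X) : Prop :=
  continuous clos_succ (clos CS) p.

Inductive formula (AP : Type) : Type :=
| FAtom : AP -> formula AP
| FTop : formula AP
| FNot : formula AP -> formula AP
| FAnd : formula AP -> formula AP -> formula AP
| FNear : formula AP -> formula AP
| FSurr : formula AP -> formula AP -> formula AP
| FReach : formula AP -> formula AP -> formula AP.
Arguments FAtom {AP} _.
Arguments FTop {AP}.
Arguments FNot {AP} _.
Arguments FAnd {AP} _ _.
Arguments FNear {AP} _.
Arguments FSurr {AP} _ _.
Arguments FReach {AP} _ _.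

Record qd_model (AP X : Type) := {
  m_space : closure_space X;
  m_qd : quasi_discrete m_space;
  m_val : AP -> set X
}.
Arguments m_space {AP X} _.
Arguments m_qd {AP X} _.
Arguments m_val {AP X} _.

Fixpoint sat {AP X : Type} (M : qd_model AP X) (f : formula AP) : set X :=
  match f with
  | FAtom a => m_val M a
  | FTop => fun _ => True
  | FNot g => fun x => ~ sat M g x
  | FAnd g h => fun x => sat M g x /\ sat M h x
  | FNear g => clos (m_space M) (sat M g)
  | FSurr g h => fun x =>
      sat M g x /\
      forall p : nat -> X, is_path (m_space M) p -> p 0 = x ->
        forall l : nat, ~ sat M g (p l) ->
          exists k, 0 < k /\ k <= l /\ sat M h (p k)
  | FReach g h => fun x =>
      sat M h x /\
      exists (y : X) (p : nat -> X) (l : nat),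
        is_path (m_space M) p /\ p 0 = y /\ p l = x /\ sat M g y /\
        forall i, 0 < i -> i < l -> sat M h (p i)
  end.

(* A set A containing x, contained in phi1, and whose boundary C(A) \ A lies in
   phi2 is exactly what surroundedness needs: a path from x that leaves A must
   do so through one step of the relation R, landing on the boundary, hence it
   meets phi2 no later than its first point outside phi1.  Conversely, the
   points reachable from x by paths avoiding phi2 after time 0 form such a set
   A: they satisfy phi1 by surroundedness, and a boundary point outside phi2
   would extend one of these paths by one step, so it would belong to A. *)
From Stdlib Require Import Classical Lia PeanoNat.

Lemma exists_exit_step (P : nat -> Prop) (l : nat) :
  P 0 -> ~ P l -> exists j, j < l /\ P j /\ ~ P (S j).
Proof.
  intros P0 Pl; induction l as [|l IH]; [contradiction|].
  destruct (classic (P l)) as [Pl'|Pl'].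
  - exists l; auto.
  - destruct (IH Pl') as [j (Hj & Pj & PSj)]. exists j; auto.
Qed.

Definition surrounded {X : Type} (CS : closure_space X) (P Q : set X) (x : X) : Prop :=
  P x /\
  forall p : nat -> X, is_path CS p -> p 0 = x ->
    forall l : nat, ~ P (p l) -> exists k, 0 < k /\ k <= l /\ Q (p k).

Definition reach_avoiding {X : Type} (CS : closure_space X) (Q : set X) (x : X) : set X :=
  fun y => exists (p : nat -> X) (l : nat),
    is_path CS p /\ p 0 = x /\ p l = y /\ forall k, 0 < k -> k <= l -> ~ Q (p k).

Section QuasiDiscrete.

Variables (X : Type) (CS : closure_space X) (R : X -> X -> Prop).
Hypothesis clos_CS : forall A, set_eq (clos CS A) (clos_R R A).

Lemma is_path_step (p : nat -> X) :
  is_path CS p -> forall n, p (S n) = p n \/ R (p n) (p (S n)).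
Proof.
  intros Hp n.
  assert (Hc : clos CS (image p (fun m => m = n)) (p (S n))).
  { apply Hp. exists (S n). split; [right; exists n; split|]; reflexivity. }
  apply clos_CS in Hc.
  destruct Hc as [[m [-> E]] | [a [[m [-> <-]] Ha]]]; auto.
Qed.

Lemma is_path_of_steps (p : nat -> X) :
  (forall n, p (S n) = p n \/ R (p n) (p (S n))) -> is_path CS p.
Proof.
  intros Hstep A y [m [Hm <-]]. apply clos_CS.
  destruct Hm as [Hm | [a [Ha ->]]].
  - left. exists m; auto.
  - destruct (Hstep a) as [E | E].
    + left. exists a; auto.
    + right. exists (p a). split; [exists a|]; auto.
Qed.

Lemma is_path_const (x : X) : is_path CS (fun _ => x).
Proof. apply is_path_of_steps; auto. Qed.

Lemma is_path_snoc (p : nat -> X) (l : nat) (z : X) :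
  is_path CS p -> R (p l) z -> is_path CS (fun i => if i <=? l then p i else z).
Proof.
  intros Hp Hz. apply is_path_of_steps; intro n.
  destruct (Nat.leb_spec (S n) l), (Nat.leb_spec n l); try lia; auto.
  - apply is_path_step; assumption.
  - replace n with l by lia. auto.
Qed.

Lemma path_exits_through_boundary (A : set X) (p : nat -> X) (l : nat) :
  is_path CS p -> A (p 0) -> ~ A (p l) ->
  exists k, 0 < k /\ k <= l /\ clos CS A (p k) /\ ~ A (p k).
Proof.
  intros Hp A0 Al.
  destruct (exists_exit_step (fun i => A (p i)) l A0 Al) as [j (Hj & Aj & ASj)].
  exists (S j). repeat split; try lia; auto.
  apply clos_CS. right. exists (p j). split; auto.
  destruct (is_path_step p Hp j) as [E | E]; [rewrite E in ASj; contradiction | exact E].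
Qed.

Lemma surrounded_of_guard (P Q A : set X) (x : X) :
  A x -> set_sub A P -> (forall z, clos CS A z -> ~ A z -> Q z) ->
  surrounded CS P Q x.
Proof.
  intros Ax AP bdQ. split; [auto|].
  intros p Hp p0 l Pl.
  destruct (path_exits_through_boundary A p l Hp) as [k (k0 & kl & Ck & Ak)].
  - rewrite p0; exact Ax.
  - intro Al; exact (Pl (AP _ Al)).
  - exists k; auto.
Qed.

Lemma reach_avoiding_start (Q : set X) (x : X) : reach_avoiding CS Q x x.
Proof.
  exists (fun _ => x), 0. repeat split; auto using is_path_const. lia.
Qed.

Lemma reach_avoiding_step (Q : set X) (x a z : X) :
  reach_avoiding CS Q x a -> R a z -> ~ Q z -> reach_avoiding CS Q x z.
Proof.
  intros [p [l (Hp & p0 & <- & Hk)]] Hz Qz.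
  exists (fun i => if i <=? l then p i else z), (S l).
  repeat split; auto using is_path_snoc.
  - replace (S l <=? l) with false by (symmetry; apply Nat.leb_gt; lia). reflexivity.
  - intros k k0 kl. destruct (Nat.leb_spec k l); auto.
Qed.

Lemma reach_avoiding_sub (P Q : set X) (x : X) :
  surrounded CS P Q x -> set_sub (reach_avoiding CS Q x) P.
Proof.
  intros [_ Hs] y [p [l (Hp & p0 & <- & Hk)]].
  apply NNPP; intro Py.
  destruct (Hs p Hp p0 l Py) as [k (k0 & kl & Qk)].
  exact (Hk k k0 kl Qk).
Qed.

Lemma reach_avoiding_boundary (Q : set X) (x z : X) :
  clos CS (reach_avoiding CS Q x) z -> ~ reach_avoiding CS Q x z -> Q z.
Proof.
  intros Cz Az. apply clos_CS in Cz.
  destruct Cz as [Az' | [a [Aa Raz]]]; [contradiction|].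
  apply NNPP; intro Qz. exact (Az (reach_avoiding_step Q x a z Aa Raz Qz)).
Qed.

Lemma surrounded_iff_guard (P Q : set X) (x : X) :
  surrounded CS P Q x <->
  exists A : set X, A x /\ (forall y, A y -> P y) /\
    (forall z, clos CS A z -> ~ A z -> Q z).
Proof.
  split.
  - intro Hs. exists (reach_avoiding CS Q x). split; [|split].
    + apply reach_avoiding_start.
    + apply reach_avoiding_sub; exact Hs.
    + apply reach_avoiding_boundary.
  - intros (A & Ax & AP & bdQ). exact (surrounded_of_guard P Q A x Ax AP bdQ).
Qed.

End QuasiDiscrete.

Theorem theorem3p7 (AP X : Type) (M : qd_model AP X) (x : X)
  (phi1 phi2 : formula AP) :
  sat M (FSurr phi1 phi2) x <->
  exists A : set X,
    A x /\
    (forall y, A y -> sat M phi1 y) /\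
    (forall z, clos (m_space M) A z -> ~ A z -> sat M phi2 z).
Proof.
  destruct (m_qd M) as [R clos_R_eq].
  exact (surrounded_iff_guard X (m_space M) R clos_R_eq (sat M phi1) (sat M phi2) x).
Qed.
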